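(* Let $\Sigma^2\subset\widetilde{\mathbb{C}}$ be a domain with para-complex coordinate $z=u+jv$, let $(F,G)=(f^1+jf^2,\,g^1+jg^2):\Sigma^2\to\widetilde{\mathbb{C}}^2$ be para-holomorphic, and let $\psi:\Sigma^2\to\mathbb{R}^3$ be the indefinite generalized IA-map \[ \psi=\Bigl(f^1-g^1,\ f^2+g^2,\ -\int\bigl\{(f^1+g^1)(f^1_u-g^1_u)+(-f^2+g^2)(f^2_u+g^2_u)\bigr\}du+\bigl\{(f^1+g^1)(f^2_u-g^2_u)+(-f^2+g^2)(f^1_u+g^1_u)\bigr\}dv\Bigr). \] Then $p\in\Sigma^2$ is a singular point of $\psi$ (i.e. $\psi$ is not immersive at $p$) if and only if $|dF|=|dG|$ at $p$, i.e. $(f^1_u)^2-(f^2_u)^2=(g^1_u)^2-(g^2_u)^2$ at $p$.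
   Context: $\widetilde{\mathbb{C}}=\{a+jb\}$ with $j^2=1$, $|u+jv|=u^2-v^2$. $F=f^1+jf^2$ is para-holomorphic if $f^1_u=f^2_v$, $f^1_v=f^2_u$; $|dF|$ denotes $|F'|$ with $F'=f^1_u+jf^2_u$. The third component is a locally defined primitive of a closed $1$-form. *)

(* Points of the para-complex plane
   z = u + j v are identified with (u, v) in R^2. *)
From Stdlib Require Import Reals.
From Coquelicot Require Import Coquelicot.
Open Scope R_scope.

Definition pu (f : R -> R -> R) (u v : R) : R := Derive (fun t => f t v) u.
Definition pv (f : R -> R -> R) (u v : R) : R := Derive (fun t => f u t) v.

Definition open2 (D : R -> R -> Prop) : Prop :=
  open (fun x : R * R => D (fst x) (snd x)).
Definition connected2 (D : R -> R -> Prop) : Prop :=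
  forall U V : R * R -> Prop, open U -> open V ->
    (forall u v, D u v -> U (u, v) \/ V (u, v)) ->
    (forall u v, D u v -> U (u, v) -> V (u, v) -> False) ->
    (exists u v, D u v /\ U (u, v)) -> (exists u v, D u v /\ V (u, v)) -> False.
Definition domain2 (D : R -> R -> Prop) : Prop :=
  (exists u v, D u v) /\ open2 D /\ connected2 D.

Definition C1_on (D : R -> R -> Prop) (f : R -> R -> R) : Prop :=
  forall u v, D u v ->
    ex_derive (fun t => f t v) u /\ ex_derive (fun t => f u t) v /\
    continuous (fun x : R * R => pu f (fst x) (snd x)) (u, v) /\
    continuous (fun x : R * R => pv f (fst x) (snd x)) (u, v).

Definition para_holomorphic (D : R -> R -> Prop) (f1 f2 : R -> R -> R) : Prop :=
  C1_on D f1 /\ C1_on D f2 /\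
  forall u v, D u v -> pu f1 u v = pv f2 u v /\ pv f1 u v = pu f2 u v.

(* |w| = a^2 - b^2 for w = a + j b, and |dF| = |F'| with F' = f1_u + j f2_u *)
Definition pnorm (a b : R) : R := a ^ 2 - b ^ 2.
Definition abs_dF (f1 f2 : R -> R -> R) (u v : R) : R :=
  pnorm (pu f1 u v) (pu f2 u v).

Definition immersive_at (X Y Z : R -> R -> R) (u v : R) : Prop :=
  forall a b : R,
    a * pu X u v + b * pv X u v = 0 ->
    a * pu Y u v + b * pv Y u v = 0 ->
    a * pu Z u v + b * pv Z u v = 0 ->
    a = 0 /\ b = 0.

Definition IA_third_component (D : R -> R -> Prop) (f1 f2 g1 g2 h : R -> R -> R)
  : Prop :=
  forall u v, D u v ->
    ex_derive (fun t => h t v) u /\ ex_derive (fun t => h u t) v /\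
    pu h u v = - ((f1 u v + g1 u v) * (pu f1 u v - pu g1 u v)
                  + (- f2 u v + g2 u v) * (pu f2 u v + pu g2 u v)) /\
    pv h u v = - ((f1 u v + g1 u v) * (pu f2 u v - pu g2 u v)
                  + (- f2 u v + g2 u v) * (pu f1 u v + pu g1 u v)).

(* The differential of the third component is the combination
   -(f1 + g1) d(psi1) - (-f2 + g2) d(psi2) of the other two, so psi is
   immersive exactly when (psi1, psi2) is, i.e. when its Jacobian does not
   vanish. By the para-Cauchy-Riemann equations that Jacobian is
   (f1_u^2 - f2_u^2) - (g1_u^2 - g2_u^2) = |dF| - |dG|. *)
From Stdlib Require Import Reals Lra.
From Coquelicot Require Import Coquelicot.
Open Scope R_scope.

Definition injective2 (p q r s : R) : Prop :=
  forall x y : R, x * p + y * q = 0 -> x * r + y * s = 0 -> x = 0 /\ y = 0.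

Lemma injective2_iff_det (p q r s : R) :
  injective2 p q r s <-> p * s - q * r <> 0.
Proof.
  split.
  - (* When the determinant vanishes, (q, -p) or (s, -r) is a nonzero kernel vector. *)
    intros Hinj Hdet.
    destruct (Req_dec p 0) as [Hp|Hp]; [destruct (Req_dec q 0) as [Hq|Hq]|].
    + destruct (Req_dec r 0) as [Hr|Hr].
      * destruct (Hinj 1 0); [rewrite Hp, Hq; ring | rewrite Hr; lra | lra].
      * destruct (Hinj s (- r)) as [_ Hr']; [rewrite Hp, Hq; ring | ring | lra].
    + destruct (Hinj q (- p)) as [Hq' _]; [ring | lra | lra].
    + destruct (Hinj q (- p)) as [_ Hp']; [ring | lra | lra].
  - intros Hdet x y H1 H2.
    assert (Hx : x * (p * s - q * r) = 0).
    { replace (x * (p * s - q * r)) with (s * (x * p + y * q) - q * (x * r + y * s))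
        by ring.
      rewrite H1, H2; ring. }
    assert (Hy : y * (p * s - q * r) = 0).
    { replace (y * (p * s - q * r)) with (p * (x * r + y * s) - r * (x * p + y * q))
        by ring.
      rewrite H1, H2; ring. }
    apply Rmult_integral in Hx; apply Rmult_integral in Hy.
    split; [destruct Hx | destruct Hy]; tauto.
Qed.

Lemma immersive_at_iff_det (X Y Z : R -> R -> R) (u v lam mu : R) :
  pu Z u v = lam * pu X u v + mu * pu Y u v ->
  pv Z u v = lam * pv X u v + mu * pv Y u v ->
  immersive_at X Y Z u v <-> pu X u v * pv Y u v - pv X u v * pu Y u v <> 0.
Proof.
  intros HZu HZv.
  rewrite <- injective2_iff_det.
  unfold immersive_at, injective2.
  rewrite HZu, HZv.
  split; intros Himm a b H1 H2; [| intros _; apply Himm; assumption].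
  apply Himm; [assumption | assumption |].
  replace (a * (lam * pu X u v + mu * pu Y u v) + b * (lam * pv X u v + mu * pv Y u v))
    with (lam * (a * pu X u v + b * pv X u v) + mu * (a * pu Y u v + b * pv Y u v))
    by ring.
  rewrite H1, H2; ring.
Qed.

Section PartialsOfSums.

Variables (f g : R -> R -> R) (u v : R).

Lemma pu_plus :
  ex_derive (fun t => f t v) u -> ex_derive (fun t => g t v) u ->
  pu (fun s t => f s t + g s t) u v = pu f u v + pu g u v.
Proof. intros; apply Derive_plus; assumption. Qed.

Lemma pu_minus :
  ex_derive (fun t => f t v) u -> ex_derive (fun t => g t v) u ->
  pu (fun s t => f s t - g s t) u v = pu f u v - pu g u v.
Proof. intros; apply Derive_minus; assumption. Qed.

Lemma pv_plus :
  ex_derive (fun t => f u t) v -> ex_derive (fun t => g u t) v ->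
  pv (fun s t => f s t + g s t) u v = pv f u v + pv g u v.
Proof. intros; apply Derive_plus; assumption. Qed.

Lemma pv_minus :
  ex_derive (fun t => f u t) v -> ex_derive (fun t => g u t) v ->
  pv (fun s t => f s t - g s t) u v = pv f u v - pv g u v.
Proof. intros; apply Derive_minus; assumption. Qed.

End PartialsOfSums.

Theorem mainTheorem4
  (D : R -> R -> Prop) (f1 f2 g1 g2 h : R -> R -> R)
  (HD : domain2 D)
  (HF : para_holomorphic D f1 f2) (HG : para_holomorphic D g1 g2)
  (Hh : IA_third_component D f1 f2 g1 g2 h)
  (u v : R) (Hp : D u v) :
  ~ immersive_at (fun s t => f1 s t - g1 s t) (fun s t => f2 s t + g2 s t) h u v
  <-> abs_dF f1 f2 u v = abs_dF g1 g2 u v.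
Proof.
  destruct HF as [Cf1 [Cf2 CRf]], HG as [Cg1 [Cg2 CRg]].
  destruct (Cf1 u v Hp) as [f1u [f1v _]], (Cf2 u v Hp) as [f2u [f2v _]].
  destruct (Cg1 u v Hp) as [g1u [g1v _]], (Cg2 u v Hp) as [g2u [g2v _]].
  destruct (CRf u v Hp) as [CRf1 CRf2], (CRg u v Hp) as [CRg1 CRg2].
  destruct (Hh u v Hp) as [_ [_ [hu hv]]].
  set (X := fun s t => f1 s t - g1 s t); set (Y := fun s t => f2 s t + g2 s t).
  assert (Xu : pu X u v = pu f1 u v - pu g1 u v) by (apply pu_minus; assumption).
  assert (Yu : pu Y u v = pu f2 u v + pu g2 u v) by (apply pu_plus; assumption).
  assert (Xv : pv X u v = pu f2 u v - pu g2 u v).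
  { rewrite <- CRf2, <- CRg2; apply pv_minus; assumption. }
  assert (Yv : pv Y u v = pu f1 u v + pu g1 u v).
  { rewrite CRf1, CRg1; apply pv_plus; assumption. }
  rewrite (immersive_at_iff_det X Y h u v (- (f1 u v + g1 u v)) (- (- f2 u v + g2 u v)));
    rewrite ?Xu, ?Xv, ?Yu, ?Yv; [| rewrite hu; ring | rewrite hv; ring].
  unfold abs_dF, pnorm.
  split; intros H.
  - destruct (Req_dec (pu f1 u v ^ 2 - pu f2 u v ^ 2) (pu g1 u v ^ 2 - pu g2 u v ^ 2))
      as [E | Hne]; [exact E |].
    exfalso; apply H; contradict Hne; lra.
  - intros Hne; apply Hne; lra.
Qed.
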